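(* Let $f:\mathbb R^d\to\mathbb R$ be continuous and convex, let $V\in\mathbb R^{d\times d}$ be positive definite, $\theta_0\in\mathbb R^d$, $b>0$, and $\mathcal E:=\{\theta\in\mathbb R^d:\|\theta-\theta_0\|_V\le b\}$. If $\tilde\theta\sim\mathcal N(\theta_0,b^2V^{-1})$, then $$\Pr\Big[f(\tilde\theta)\ge\max_{\theta\in\mathcal E}f(\theta)\Big]\ge\frac{1}{4\sqrt{e\pi}}.$$
   Context: $\|x\|_V=\sqrt{x^\top Vx}$. *)

From HB Require Import structures.
From mathcomp Require Import all_boot all_order all_algebra.
From mathcomp Require Import all_classical all_reals all_analysis.
Set Implicit Arguments. Unset Strict Implicit. Unset Printing Implicit Defensive.
Import Order.TTheory GRing.Theory Num.Theory.
Import numFieldNormedType.Exports.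
Local Open Scope classical_set_scope.
Local Open Scope ring_scope.

Section Defs.
Context {R : realType} {d : nat}.

Definition quadf (M : 'M[R]_d) (x : 'rV[R]_d) : R := (x *m M *m x^T) 0 0.

Definition Vnorm (V : 'M[R]_d) (x : 'rV[R]_d) : R := Num.sqrt (quadf V x).

Definition posdef (V : 'M[R]_d) : Prop :=
  V^T = V /\ forall x : 'rV[R]_d, x != 0 -> 0 < quadf V x.

Definition convex_fun (f : 'rV[R]_d -> R) : Prop :=
  forall (x y : 'rV[R]_d) (t : R), 0 <= t <= 1 ->
    f (t *: x + (1 - t) *: y) <= t * f x + (1 - t) * f y.

(* Multivariate normal law N(mu, Sigma) of a random vector X (Cramer-Wold
   definition): for every nonzero u, the real random variable <X, u> is
   measurable with law N(<mu,u>, u^T Sigma u) (normal_prob takes mean and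
   standard deviation). *)
Definition gaussian_vector {dT : measure_display} {T : measurableType dT}
    (P : probability T R) (X : T -> 'rV[R]_d) (mu : 'rV[R]_d) (Sigma : 'M[R]_d)
    : Prop :=
  forall u : 'rV[R]_d, u != 0 ->
    measurable_fun setT (fun w => (X w *m u^T) 0 0) /\
    forall A : set R, measurable A ->
      P ((fun w => (X w *m u^T) 0 0) @^-1` A) =
      normal_prob ((mu *m u^T) 0 0) (Num.sqrt (quadf Sigma u)) A.

End Defs.

From HB Require Import structures.
From mathcomp Require Import all_boot all_order all_algebra.
From mathcomp Require Import all_classical all_reals all_analysis.
From mathcomp Require Import ring lra.
Set Implicit Arguments. Unset Strict Implicit. Unset Printing Implicit Defensive.
Import Order.TTheory GRing.Theory Num.Theory.
Import numFieldNormedType.Exports measurable_realfun.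
Local Open Scope classical_set_scope.
Local Open Scope ring_scope.

(* Let [ts] maximise the continuous [f] on the compact ellipsoid [E]. If [x] lies
   strictly beyond the tangent hyperplane of [E] at [ts], i.e.
   [<x - ts, V (ts - theta0)> > 0], then the ray from [x] through [ts] enters [E],
   so [ts] is a convex combination of [x] and a point of [E] and convexity gives
   [f ts <= f x]. The Gaussian probability of that half-space is a one-dimensional
   normal tail beyond at most one standard deviation, hence at least
   [P(Z > 1) >= 1 / (4 sqrt (e pi))]. *)

Section normal_tail.
Variable R : realType.

Lemma expR_ge_pow4 (a : R) : 0 <= a <= 4 -> (1 - a / 4) ^+ 4 <= expR (- a).
Proof.
move=> /andP[a0 a4].
have -> : - a = 4%:R * (- (a / 4)) by field.
rewrite expRM_natl ler_pXn2r ?nnegrE ?expR_ge0//; last lra.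
exact: expR_ge1Dx.
Qed.

Lemma sqrt2_le_expR_sum :
  Num.sqrt 2 <= expR (- (9 / 32)) + expR (- (5 / 8)) + 2 * expR (- (3 / 2)) :> R.
Proof.
have s2 : Num.sqrt 2 <= 3 / 2 :> R.
  rewrite -[leRHS]ger0_norm; last lra.
  by rewrite -sqrtr_sqr ler_sqrt ?sqr_ge0//; lra.
have e1 : 74 / 100 <= (1 - (9 / 32) / 4) ^+ 4 :> R by rewrite !exprS expr0; lra.
have e2 : 50 / 100 <= (1 - (5 / 8) / 4) ^+ 4 :> R by rewrite !exprS expr0; lra.
have e3 : 15 / 100 <= (1 - (3 / 2) / 4) ^+ 4 :> R by rewrite !exprS expr0; lra.
have := @expR_ge_pow4 (9 / 32) ltac:(lra).
have := @expR_ge_pow4 (5 / 8) ltac:(lra).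
have := @expR_ge_pow4 (3 / 2) ltac:(lra).
lra.
Qed.

(* A lower Riemann sum of the standard normal density on the intervals
   [[1, 5/4]], [[5/4, 3/2]], [[3/2, 2]]. *)
Lemma tail_lower_sum_ge :
  1 / (4 * Num.sqrt (expR 1 * pi)) <=
  (expR (- (25 / 32)) / 4 + expR (- (9 / 8)) / 4 + expR (- 2) / 2)
    / Num.sqrt (pi *+ 2) :> R.
Proof.
set h := expR (1 / 2 : R); set q := Num.sqrt (pi : R); set r2 := Num.sqrt (2 : R).
have h0 : 0 < h by exact: expR_gt0.
have q0 : 0 < q by rewrite sqrtr_gt0 pi_gt0.
have r20 : 0 < r2 by rewrite sqrtr_gt0.
have eh : Num.sqrt (expR 1 * pi) = h * q.
  rewrite sqrtrM ?expR_ge0//; congr (_ * _).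
  rewrite -(@ger0_norm _ h) ?ltW// -sqrtr_sqr -expRM_natl.
  by congr (Num.sqrt (expR _)); field.
have eq2 : Num.sqrt (pi *+ 2) = q * r2.
  by rewrite -mulr_natr sqrtrM// pi_ge0.
have eE a : expR (- a - 1 / 2) = expR (- a) / h by rewrite expRB.
rewrite (_ : - (25 / 32) = - (9 / 32) - 1 / 2); last by field.
rewrite (_ : - (9 / 8) = - (5 / 8) - 1 / 2); last by field.
rewrite (_ : - 2 = - (3 / 2) - 1 / 2); last by field.
rewrite !eE eh eq2.
have := sqrt2_le_expR_sum; rewrite -/r2.
set F1 := expR (- (9 / 32)); set F2 := expR (- (5 / 8)); set F3 := expR (- (3 / 2)).
move=> hF.
rewrite (_ : _ / (q * r2) = (F1 + F2 + 2 * F3) * (1 / (4 * h * q * r2))); last first.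
  by field; rewrite ?mulf_neq0 ?gt_eqF.
rewrite (_ : 1 / (4 * (h * q)) = r2 * (1 / (4 * h * q * r2))); last first.
  by field; rewrite ?mulf_neq0 ?gt_eqF.
by apply: ler_wpM2r hF; rewrite divr_ge0// ltW// !mulr_gt0.
Qed.

Lemma normal_pdf_ge (m s t x : R) : 0 < s -> 0 <= x - m <= s * t ->
  normal_peak s * expR (- t ^+ 2 / 2) <= normal_pdf m s x.
Proof.
move=> s0 /andP[xm0 xmst]; rewrite normal_pdfE ?gt_eqF//.
rewrite ler_pM2l ?normal_peak_gt0 ?gt_eqF// ler_expR !mulNr lerN2.
rewrite ler_pdivrMr; last by rewrite mulrn_wgt0// exprn_gt0.
rewrite (_ : t ^+ 2 / 2 * (s ^+ 2 *+ 2) = (s * t) ^+ 2); last first.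
  by rewrite -mulr_natr exprMn; field.
by rewrite ler_pXn2r ?nnegrE//; exact: le_trans xmst.
Qed.

Lemma normal_peak_scale (s : R) : 0 < s -> normal_peak s * s = (Num.sqrt (pi *+ 2))^-1.
Proof.
move=> s0; rewrite /normal_peak -mulrnAr sqrtrM ?sqr_ge0// sqrtr_sqr gtr0_norm//.
by rewrite invfM mulrAC mulVf ?gt_eqF// mul1r.
Qed.

Local Open Scope ereal_scope.

Lemma integral_itvoc_ge (f : R -> R) (a b L : R) : measurable_fun setT f ->
  (a < b)%R -> (0 <= L)%R -> (forall x, (a < x <= b)%R -> (L <= f x)%R) ->
  (L * (b - a))%:E <= \int[lebesgue_measure]_(x in `]a, b]) (f x)%:E.
Proof.
move=> mf ab L0 Lf.
have -> : (L * (b - a))%:E = \int[lebesgue_measure]_(x in `]a, b]) (cst L%:E x).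
  by rewrite integral_cst//= lebesgue_measure_itv/= lte_fin ab -EFinD -EFinM.
apply: ge0_le_integral => //.
by apply/measurable_EFinP; exact: measurable_funS mf.
Qed.

Lemma integral_itvoc_split (f : R -> R) (a b c : R) : measurable_fun setT f ->
  (forall x, (0 <= f x)%R) -> (a <= b)%R -> (b <= c)%R ->
  \int[lebesgue_measure]_(x in `]a, c]) (f x)%:E =
  \int[lebesgue_measure]_(x in `]a, b]) (f x)%:E +
  \int[lebesgue_measure]_(x in `]b, c]) (f x)%:E.
Proof.
move=> mf f0 ab bc.
rewrite (@itv_bndbnd_setU _ _ (BRight a) (BRight b) (BRight c)) ?bnd_simp//.
rewrite ge0_integral_setU//.
- apply/measurable_EFinP; exact: measurable_funS mf.
- by move=> x _; rewrite lee_fin.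
- rewrite disj_set2E; apply/eqP/seteqP; split=> x //=.
  by rewrite !in_itv/= => -[/andP[_ xb] /andP[/lt_le_trans/(_ xb)]]; rewrite ltxx.
Qed.

Local Close Scope ereal_scope.

Lemma normal_prob_tail_ge (m s c : R) : 0 < s -> c <= m + s ->
  ((1 / (4 * Num.sqrt (expR 1 * pi)))%:E <= normal_prob m s `]c, +oo[)%E.
Proof.
move=> s0 cs.
have mpdf := measurable_normal_pdf m s.
have pdf0 := normal_pdf_ge0 m s.
pose at_ (t : R) := (m + s * t).
have piece t1 t2 : 0 <= t1 < t2 ->
    (((normal_peak s * expR (- t2 ^+ 2 / 2)) * (at_ t2 - at_ t1))%:E <=
    \int[lebesgue_measure]_(x in `]at_ t1, at_ t2]) (normal_pdf m s x)%:E)%E.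
  move=> /andP[t10 t12]; apply: integral_itvoc_ge => //.
  - by rewrite ltrD2l ltr_pM2l.
  - by rewrite mulr_ge0 ?normal_peak_ge0 ?expR_ge0.
  move=> x /andP[x1 x2]; apply: normal_pdf_ge => //.
  have : 0 <= s * t1 by apply: mulr_ge0 => //; exact: ltW.
  by rewrite /at_ in x1 x2 => ?; apply/andP; split; lra.
apply: (@le_trans _ _ (\int[lebesgue_measure]_(x in `]at_ 1%R, at_ 2%R])
    (normal_pdf m s x)%:E)%E); last first.
  apply: ge0_subset_integral => //.
  - apply/measurable_EFinP; exact: measurable_funS mpdf.
  - by move=> x _; rewrite lee_fin.
  move=> x /=; rewrite !in_itv/= andbT /at_ mulr1 => /andP[+ _].
  exact: le_lt_trans.
rewrite (@integral_itvoc_split _ _ (at_ (5 / 4))) //; last 2 first.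
- by rewrite lerD2l ler_pM2l//; lra.
- by rewrite lerD2l ler_pM2l//; lra.
rewrite (@integral_itvoc_split _ (at_ (5 / 4)) (at_ (3 / 2))) //; last 2 first.
- by rewrite lerD2l ler_pM2l//; lra.
- by rewrite lerD2l ler_pM2l//; lra.
apply: le_trans (leeD (piece 1 (5 / 4) _) (leeD (piece (5 / 4) (3 / 2) _)
  (piece (3 / 2) 2 _))); try by apply/andP; split; lra.
rewrite -!EFinD lee_fin /at_.
rewrite (_ : - (5 / 4) ^+ 2 / 2 = - (25 / 32)); last by rewrite expr2; field.
rewrite (_ : - (3 / 2) ^+ 2 / 2 = - (9 / 8)); last by rewrite expr2; field.
rewrite (_ : - 2 ^+ 2 / 2 = - 2); last by rewrite expr2; field.
apply: le_trans tail_lower_sum_ge _; rewrite -(@normal_peak_scale s s0).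
by rewrite le_eqVlt; apply/orP; left; apply/eqP; field.
Qed.

End normal_tail.

Lemma floor_scaled_near (R : realType) (N x : R) : 0 < N ->
  x \in `](Num.floor (N * x))%:~R / N - N^-1, (Num.floor (N * x))%:~R / N + N^-1[.
Proof.
move=> N0; have /andP[lo hi] := floor_itv (N * x); rewrite intrD in hi.
set F := (Num.floor (N * x))%:~R in lo hi *.
rewrite in_itv/= (_ : F / N - N^-1 = (F - 1) / N); last by field; rewrite gt_eqF.
rewrite (_ : F / N + N^-1 = (F + 1) / N); last by field; rewrite gt_eqF.
by rewrite ltr_pdivrMr // ltr_pdivlMr //; apply/andP; split; lra.
Qed.

Section grid_boxes.
Variables (R : realType) (d : nat).

(* The box of half-side [1/N] centred at [z/N], where [p = (z, N.-1)]. *)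
Definition grid_itv (p : 'rV[int]_d * nat) (i : 'I_d) : interval R :=
  let N := p.2.+1%:R in `](p.1 0 i)%:~R / N - N^-1, (p.1 0 i)%:~R / N + N^-1[.

Definition grid_box (p : 'rV[int]_d * nat) : set 'rV[R]_d :=
  [set x | forall i, x 0 i \in grid_itv p i].

Lemma open_grid_cover (O : set 'rV[R]_d) : open O ->
  O = \bigcup_(p in [set p | grid_box p `<=` O]) grid_box p.
Proof.
move=> oO; apply/seteqP; split=> [x Ox|x [p pO]]; last exact: pO.
have /nbhs_ballP[e e0 xeO] := oO _ Ox.
have [k ke] : exists k : nat, k.+1%:R^-1 < e / 2.
  have [k] := @ltr_add_invr R 0 (e / 2) (divr_gt0 e0 (ltr0Sn _ 1)).
  by rewrite add0r; exists k.
pose z : 'rV[int]_d := \row_i Num.floor (k.+1%:R * x 0 i).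
have xz : grid_box (z, k) x.
  by move=> i; rewrite /grid_itv /= mxE; exact: floor_scaled_near.
exists (z, k) => // y yz; apply: xeO; split => // i j; rewrite (ord1 i).
move: (xz j) (yz j); rewrite /grid_itv /= !in_itv /= => /andP[x1 x2] /andP[y1 y2].
set r := k.+1%:R^-1 in ke x1 x2 y1 y2; set c := _ / k.+1%:R in x1 x2 y1 y2.
by rewrite /ball /= ltr_norml; apply/andP; split; lra.
Qed.

Variables (dT : measure_display) (T : measurableType dT) (X : T -> 'rV[R]_d).
Hypothesis mX : forall i, measurable_fun setT (fun w => X w 0 i).

Lemma measurable_preimage_grid_box p : measurable (X @^-1` grid_box p).
Proof.
rewrite (_ : X @^-1` _ =
    \bigcap_(i in setT) ((fun w => X w 0 i) @^-1` [set` grid_itv p i])).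
  apply: fin_bigcap_measurable => [|i _]; first exact: finite_finset.
  by rewrite -[X in measurable X]setTI; exact: mX.
by apply/seteqP; split=> w /= h i => [_|]; [exact: h | exact: h].
Qed.

Lemma measurable_preimage_open (O : set 'rV[R]_d) : open O -> measurable (X @^-1` O).
Proof.
move=> /open_grid_cover ->; rewrite preimage_bigcup bigcup_mkcond.
apply: countable_bigcupT_measurable; first exact: countableP.
by move=> p; case: ifP => // _; exact: measurable_preimage_grid_box.
Qed.

Lemma measurable_preimage_closed (C : set 'rV[R]_d) : closed C -> measurable (X @^-1` C).
Proof.
move=> cC; rewrite -[C]setCK -preimage_setC; apply: measurableC.
exact/measurable_preimage_open/closed_openC.
Qed.

End grid_boxes.

Section quadratic_form.
Variables (R : realType) (d : nat).
Implicit Types (V : 'M[R]_d) (x y z : 'rV[R]_d).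

Definition bilinf V x y : R := (x *m V *m y^T) 0 0.

Let trmx00 (A : 'M[R]_1) : A 0 0 = A^T 0 0. Proof. by rewrite mxE. Qed.
Let addmx00 (A B : 'M[R]_1) : (A + B) 0 0 = A 0 0 + B 0 0. Proof. by rewrite mxE. Qed.
Let submx00 (A B : 'M[R]_1) : (A - B) 0 0 = A 0 0 - B 0 0. Proof. by rewrite !mxE. Qed.

Lemma bilinf_sym V x y : V^T = V -> bilinf V x y = bilinf V y x.
Proof.
by move=> sV; rewrite /bilinf trmx00 trmx_mul trmxK trmx_mul sV mulmxA.
Qed.

Lemma bilinfE V y z : bilinf V y z = (z *m (y *m V)^T) 0 0.
Proof. by rewrite /bilinf trmx00 !trmx_mul trmxK mulmxA. Qed.

Lemma quadfE V x : quadf V x = bilinf V x x. Proof. by []. Qed.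

Lemma bilinfDr V x y z : bilinf V x (y + z) = bilinf V x y + bilinf V x z.
Proof. by rewrite /bilinf linearD /= mulmxDr addmx00. Qed.

Lemma bilinfBr V x y z : bilinf V x (y - z) = bilinf V x y - bilinf V x z.
Proof. by rewrite /bilinf linearB /= mulmxBr submx00. Qed.

Lemma bilinfZr V a x y : bilinf V x (a *: y) = a * bilinf V x y.
Proof. by rewrite /bilinf linearZ /= -scalemxAr mxE. Qed.

Lemma quadfD V x y : V^T = V ->
  quadf V (x + y) = quadf V x + 2 * bilinf V x y + quadf V y.
Proof.
move=> sV; rewrite /quadf linearD /= mulmxDr !mulmxDl !addmx00.
by rewrite -/(bilinf V y x) -/(bilinf V x y) (bilinf_sym y x sV) mulr2n; ring.
Qed.

Lemma quadfZ V a x : quadf V (a *: x) = a ^+ 2 * quadf V x.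
Proof. by rewrite /quadf linearZ /= -scalemxAr -!scalemxAl !mxE mulrA expr2. Qed.

Lemma quadf0 V : quadf V 0 = 0.
Proof. by rewrite /quadf !mul0mx mxE. Qed.

Lemma quadf_scalemx a V x : quadf (a *: V) x = a * quadf V x.
Proof. by rewrite /quadf -scalemxAr -scalemxAl mxE. Qed.

Lemma quadf_invmx V y : V^T = V -> V \in unitmx ->
  quadf (invmx V) (y *m V) = quadf V y.
Proof.
move=> sV uV.
by rewrite /quadf -(mulmxA y) mulmxV // mulmx1 trmx_mul sV mulmxA.
Qed.

Lemma posdef_quadf_ge0 V x : posdef V -> 0 <= quadf V x.
Proof.
by move=> [_ pV]; have [->|/pV/ltW//] := eqVneq x 0; rewrite quadf0.
Qed.

Lemma posdef_unitmx V : posdef V -> V \in unitmx.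
Proof.
move=> [_ pV]; rewrite -row_free_unit; apply: inj_row_free => v vV0.
by have [//|/pV] := eqVneq v 0; rewrite /quadf vV0 !mul0mx mxE ltxx.
Qed.

Lemma posdef_mulmx_neq0 V y : posdef V -> y != 0 -> y *m V != 0.
Proof.
move=> pV; apply: contra_neq => yV0.
by rewrite -(mulmxK (posdef_unitmx pV) y) yV0 mul0mx.
Qed.

Lemma Vnorm_le V x b : 0 <= b -> (Vnorm V x <= b) = (quadf V x <= b ^+ 2).
Proof.
move=> b0; rewrite /Vnorm -[in LHS](@ger0_norm _ b) // -sqrtr_sqr.
by rewrite ler_sqrt ?sqr_ge0.
Qed.

Lemma continuous_quadf V : continuous (quadf V).
Proof.
have coord j : continuous (fun x : 'rV[R]_d => x 0 j) := @coord_continuous R 1 d 0 j.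
rewrite (_ : quadf V = fun x => \sum_j (\sum_k x 0 k * V k j) * x 0 j); last first.
  by apply/funext => x; rewrite /quadf !mxE; apply: eq_bigr => j _; rewrite !mxE.
apply: continuous_big => [|j _ x]; first exact: add_continuous.
have row_j : continuous (fun y : 'rV[R]_d => \sum_k y 0 k * V k j).
  apply: continuous_big => [|k _ y]; first exact: add_continuous.
  exact: continuousM (coord k y) (@cst_continuous _ _ (V k j) y).
exact: continuousM (row_j x) (coord j x).
Qed.

(* Take [c] to be the minimum of [quadf V] on the (compact) unit sphere. *)
Lemma posdef_quadf_coercive V : posdef V ->
  exists2 c, 0 < c & forall x, c * `|x| ^+ 2 <= quadf V x.
Proof.
move=> pV.
case: (pselect (exists x : 'rV[R]_d, x != 0)) => [[x0 x0n0]|all0]; last first.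
  exists 1 => // x; have -> : x = 0 by apply/eqP/negPn/negP => x0; apply: all0; exists x.
  by rewrite normr0 expr0n mulr0 quadf0.
pose S := [set x : 'rV[R]_d | `|x| = 1].
have normalize x : x != 0 -> S (`|x|^-1 *: x).
  by move=> xn0; rewrite /S /= mx_normZ normfV normr_id mulVf ?normr_eq0.
have cS : compact S.
  apply: bounded_closed_compact.
    exists 1; split => [|M M1 x]; first exact: num_real.
    by rewrite /S /= => ->; exact: ltW.
  have norm_cont : continuous (fun x : 'rV[R]_d => `|x|).
    by move=> x; exact: norm_continuous.
  exact: (continuous_closedP _).1 norm_cont _ (@closed_eq R 1).
have [u uS umin] := EVT_min_rV (ex_intro _ _ (normalize _ x0n0)) cS
  (continuous_subspaceT (@continuous_quadf V)).
have un0 : u != 0.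
  apply: contraPneq uS => ->.
  by rewrite inE /S /= normr0 => /esym/eqP; rewrite oner_eq0.
exists (quadf V u) => [|x]; first exact: pV.2.
have [->|xn0] := eqVneq x 0; first by rewrite normr0 expr0n mulr0 quadf0.
have -> : quadf V x = `|x| ^+ 2 * quadf V (`|x|^-1 *: x).
  by rewrite -quadfZ scalerA mulfV ?normr_eq0 // scale1r.
by rewrite mulrC ler_wpM2l ?sqr_ge0 // umin // inE; exact: normalize.
Qed.

Definition ellipsoid V (th0 : 'rV[R]_d) (r : R) : set 'rV[R]_d :=
  [set th | quadf V (th - th0) <= r].

Lemma compact_ellipsoid V th0 r : posdef V -> compact (ellipsoid V th0 r).
Proof.
move=> pV; have [c c0 hc] := posdef_quadf_coercive pV.
apply: bounded_closed_compact.
  exists (`|th0| + 1 + r / c); split => [|M hM th Eth]; first exact: num_real.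
  apply: ltW; apply: le_lt_trans hM; rewrite -addrA.
  apply: le_trans (_ : `|th0| + `|th - th0| <= _).
    by rewrite -{1}(subrK th0 th) addrC ler_normD.
  rewrite lerD2l; set y := `|th - th0|.
  have y0 : 0 <= y by exact: normr_ge0.
  have yr : y ^+ 2 <= r / c.
    by rewrite ler_pdivlMr // mulrC; exact: le_trans (hc _) Eth.
  have r0 : 0 <= r / c by exact: le_trans (sqr_ge0 _) yr.
  have [y1|y1] := lerP y 1; first lra.
  have : y <= y ^+ 2 by rewrite expr2 ler_peMl // ltW.
  lra.
have cont : continuous (fun th : 'rV[R]_d => quadf V (th - th0)).
  have shift : continuous (fun th : 'rV[R]_d => th - th0).
    by move=> x; exact: continuousB (@cvg_id _ _) (@cst_continuous _ _ th0 x).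
  by move=> x; exact: continuous_comp (shift x) (@continuous_quadf V _).
exact: (continuous_closedP _).1 cont _ (@closed_le R r).
Qed.

Lemma ellipsoid_argmax (f : 'rV[R]_d -> R) V th0 r : continuous f -> posdef V ->
  0 <= r -> exists2 ts, ellipsoid V th0 r ts &
    forall th, ellipsoid V th0 r th -> f th <= f ts.
Proof.
move=> cf pV r0.
have E0 : ellipsoid V th0 r th0 by rewrite /ellipsoid /= subrr quadf0.
have [ts tsE tsmax] := EVT_max_rV (ex_intro _ _ E0) (@compact_ellipsoid V th0 r pV)
  (continuous_subspaceT cf).
by exists ts; [rewrite -inE | move=> th Eth; apply: tsmax; rewrite inE].
Qed.

End quadratic_form.

Section convex_on_ellipsoid.
Variables (R : realType) (d : nat).
Implicit Types (V : 'M[R]_d) (c x w ts : 'rV[R]_d).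

(* [ts] is a convex combination of [x] and of the point [ts + s (ts - x)]. *)
Lemma convex_le_of_extension (f : 'rV[R]_d -> R) ts x (s : R) :
  convex_fun f -> 0 < s -> f (ts + s *: (ts - x)) <= f ts -> f ts <= f x.
Proof.
move=> cf s0 fz; pose t := (1 + s)^-1.
have t0 : 0 < t by rewrite invr_gt0; lra.
have t1 : 0 < 1 - t by rewrite subr_gt0 invf_lt1; lra.
have t01 : 0 <= t <= 1 by apply/andP; split; lra.
have := cf (ts + s *: (ts - x)) x t t01.
rewrite (_ : t *: _ + (1 - t) *: x = ts); last first.
  by apply/rowP => i; rewrite !mxE /t; field; apply/eqP; lra.
have : t * f (ts + s *: (ts - x)) <= t * f ts by rewrite ler_pM2l.
rewrite -(ler_pM2l t1); nra.
Qed.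

Lemma ellipsoid_extends V c r ts w : posdef V -> 0 < r ->
  ellipsoid V c r ts -> bilinf V (ts - c) w < 0 \/ ts = c ->
  exists2 s, 0 < s & ellipsoid V c r (ts + s *: w).
Proof.
move=> pV r0; rewrite /ellipsoid /= => Ets.
have Q0 := posdef_quadf_ge0 w pV; set Q := quadf V w in Q0 *.
set y := ts - c in Ets *.
case=> [a0 | ts0].
- exists (- bilinf V y w / (Q + 1)); first by rewrite divr_gt0 //; lra.
  rewrite /= addrAC -/y quadfD ?pV.1 // quadfZ bilinfZr -/Q.
  set a := bilinf V y w in a0 *; set s := - a / (Q + 1).
  have s0 : 0 < s by rewrite divr_gt0 //; lra.
  have Q1 : Q + 1 != 0 by rewrite gt_eqF //; lra.
  have sQ1 : s * (Q + 1) = - a by rewrite /s divfK.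
  have : s * a < 0 by rewrite pmulr_rlt0.
  by rewrite expr2; nra.
- exists (Num.sqrt r / Num.sqrt (Q + 1)).
    by rewrite divr_gt0 // sqrtr_gt0 //; lra.
  rewrite /= addrAC /y ts0 subrr add0r quadfZ expr_div_n (sqr_sqrtr (ltW r0)).
  rewrite sqr_sqrtr; last lra.
  rewrite mulrAC ler_pdivrMr; last lra.
  by rewrite ler_pM2l // -/Q; lra.
Qed.

Lemma ellipsoid_argmax_le (f : 'rV[R]_d -> R) V c r ts :
  convex_fun f -> posdef V -> 0 < r -> ellipsoid V c r ts ->
  (forall th, ellipsoid V c r th -> f th <= f ts) ->
  forall x, bilinf V (ts - c) (ts - x) < 0 \/ ts = c -> f ts <= f x.
Proof.
move=> cf pV r0 Ets tsmax x /(ellipsoid_extends pV r0 Ets) [s s0 Ez].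
exact: convex_le_of_extension cf s0 (tsmax _ Ez).
Qed.

End convex_on_ellipsoid.

Section gaussian_vector.
Variables (R : realType) (d : nat) (dT : measure_display) (T : measurableType dT).
Variables (P : probability T R) (X : T -> 'rV[R]_d) (mu : 'rV[R]_d) (Sigma : 'M[R]_d).
Hypothesis gX : gaussian_vector P X mu Sigma.

Lemma gaussian_vector_measurable_coord i : measurable_fun setT (fun w => X w 0 i).
Proof.
pose e : 'rV[R]_d := delta_mx 0 i.
have e_n0 : e != 0 by apply/negP => /eqP/matrixP/(_ 0 i)/eqP; rewrite !mxE !eqxx oner_eq0.
have [mXe _] := @gX _ e_n0.
suff -> : (fun w => X w 0 i) = (fun w => (X w *m e^T) 0 0) by [].
apply/funext => w; rewrite trmx_delta mxE (bigD1 i) //= mxE !eqxx mulr1.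
by rewrite big1 ?addr0 // => k ki; rewrite mxE (negbTE ki) mulr0.
Qed.

Let halfspaceE (u : 'rV[R]_d) c : [set w | c < (X w *m u^T) 0 0] =
  (fun w => (X w *m u^T) 0 0) @^-1` `]c, +oo[.
Proof. by apply/seteqP; split => w /=; rewrite in_itv /= andbT. Qed.

Lemma gaussian_vector_measurable_halfspace (u : 'rV[R]_d) c : u != 0 ->
  measurable [set w | c < (X w *m u^T) 0 0].
Proof.
move=> un0; have [mXu _] := @gX _ un0.
by rewrite halfspaceE -[X in measurable X]setTI; exact: mXu.
Qed.

Lemma gaussian_vector_halfspace (u : 'rV[R]_d) c : u != 0 ->
  P [set w | c < (X w *m u^T) 0 0] =
  normal_prob ((mu *m u^T) 0 0) (Num.sqrt (quadf Sigma u)) `]c, +oo[.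
Proof. by move=> un0; have [_ <-] := @gX _ un0; rewrite ?halfspaceE. Qed.

End gaussian_vector.

Lemma tail_constant_le1 (R : realType) : 1 / (4 * Num.sqrt (expR 1 * pi)) <= 1 :> R.
Proof.
have e1 : 1 <= expR 1 * pi :> R.
  by have := expR_ge1Dx (1 : R); have := pi_ge2 R; nra.
have : 1 <= Num.sqrt (expR 1 * pi) :> R.
  by rewrite -[X in X <= _]sqrtr1 ler_sqrt //; lra.
by move=> h; rewrite ler_pdivrMr; lra.
Qed.

(* [<X, y V>] is normal with standard deviation [b ||y||_V >= ||y||_V ^ 2], and
   [||y||_V ^ 2] is the distance from its mean to the threshold. *)
Lemma gaussian_tangent_halfspace_ge (R : realType) (d : nat) (dT : measure_display)
    (T : measurableType dT) (P : probability T R) (X : T -> 'rV[R]_d)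
    (V : 'M[R]_d) (th0 y : 'rV[R]_d) (b : R) :
  posdef V -> 0 < b -> y != 0 -> quadf V y <= b ^+ 2 ->
  gaussian_vector P X th0 (b ^+ 2 *: invmx V) ->
  ((1 / (4 * Num.sqrt (expR 1 * pi)))%:E <=
   P [set w | (((th0 + y) *m (y *m V)^T) 0 0 < (X w *m (y *m V)^T) 0 0)%R])%E.
Proof.
move=> pV b0 yn0 yb gX.
rewrite (gaussian_vector_halfspace gX) ?posdef_mulmx_neq0 //.
rewrite quadf_scalemx quadf_invmx ?posdef_unitmx ?pV.1 //.
rewrite [Num.sqrt (_ * quadf V y)]sqrtrM ?sqr_ge0 // sqrtr_sqr gtr0_norm //.
rewrite -!bilinfE bilinfDr -quadfE.
have q0 : 0 < quadf V y by exact: pV.2.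
have sq_le_b : Num.sqrt (quadf V y) <= b by rewrite -(Vnorm_le _ _ (ltW b0)) in yb.
apply: normal_prob_tail_ge; first by rewrite mulr_gt0 // sqrtr_gt0.
rewrite lerD2l -{1}(sqr_sqrtr (ltW q0)) expr2 ler_pM2r //.
by rewrite sqrtr_gt0.
Qed.

Theorem mainTheorem5 (R : realType) (d : nat) (f : 'rV[R]_d -> R)
    (V : 'M[R]_d) (theta0 : 'rV[R]_d) (b : R)
    (dT : measure_display) (T : measurableType dT) (P : probability T R)
    (theta : T -> 'rV[R]_d) :
  continuous f -> convex_fun f -> posdef V -> 0 < b ->
  gaussian_vector P theta theta0 (b ^+ 2 *: invmx V) ->
  ((1 / (4 * Num.sqrt (expR 1 * pi)))%:E <=
    P [set w | forall th : 'rV[R]_d, (Vnorm V (th - theta0) <= b)%R ->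
                 (f th <= f (theta w))%R])%E.
Proof.
move=> cf cvx pV b0 gt.
have b20 : 0 < b ^+ 2 by rewrite exprn_gt0.
have [ts Ets tsmax] := ellipsoid_argmax theta0 cf pV (ltW b20).
have dominated := ellipsoid_argmax_le cvx pV b20 Ets tsmax.
have -> : [set w | forall th, Vnorm V (th - theta0) <= b -> f th <= f (theta w)] =
    theta @^-1` [set x | f ts <= f x].
  apply/seteqP; split => w /= h; first by apply: h; rewrite (Vnorm_le _ _ (ltW b0)).
  by move=> th; rewrite (Vnorm_le _ _ (ltW b0)) => /tsmax/le_trans; apply.
have [ts0|tsn0] := eqVneq ts theta0.
  rewrite (_ : _ @^-1` _ = setT) ?probability_setT ?lee_fin ?tail_constant_le1 //.
  by apply/seteqP; split => // w _; apply: dominated; right.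
have yn0 : ts - theta0 != 0 by rewrite subr_eq0.
apply: le_trans (gaussian_tangent_halfspace_ge pV b0 yn0 Ets gt) _.
rewrite subrKC; apply: le_measure; rewrite ?inE.
- exact: gaussian_vector_measurable_halfspace gt _ _ (posdef_mulmx_neq0 pV yn0).
- apply: measurable_preimage_closed (gaussian_vector_measurable_coord gt) _ _.
  exact: (continuous_closedP f).1 cf _ (@closed_ge R (f ts)).
- move=> w /= tsw; apply: dominated; left.
  by rewrite bilinfBr !bilinfE subr_lt0.
Qed.
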